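(* Fix integers $q\ge 2$, $k\ge 3$, $l\in\{1,\dots,k-1\}$ and $r$ with $3\le r\le k$, and let $u(n)$ satisfy $u(n)\to\infty$ and $u(n)/n\to 0$. Suppose that every local function $f_a\colon[q]^k\to[q]^l$ used in the generator is surjective and $(r-1)$-wise independent. Let $\mu$ be any constant with $0<\mu<\mu_{\mathrm c}(k,r):=\binom{k}{r}^{-1}\frac{(r-2)^{r-2}}{r(r-1)^{r-1}}$, and let $m=\lfloor \mu\, n^{r-1}/u(n)^{r-2}\rfloor$. Then there is a constant $c>0$ such that for all sufficiently large $n$, with probability at least $1-e^{-c\,u(n)}$ (over the random generator and the planted input), the linear program (LP) below has a zero-optimal solution whose integral part has fewer than $\bigl(1+\frac{1}{r-2}\bigr)u(n)$ elements; i.e. the LP relaxation cannot fix $\frac{1}{r-2}u(n)$ input variables beyond the $u(n)$ known ones.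
   Context: Random generalized Goldreich generator: $[q]=\{1,\dots,q\}$. For each $a\in[m]$ a (deterministic) function $f_a\colon[q]^k\to[q]^l$ is fixed. For each $a\in[m]$ independently, a $k$-tuple $(i^{(a)}_1,\dots,i^{(a)}_k)$ of pairwise distinct elements of $[n]$ is chosen uniformly among all $n(n-1)\cdots(n-k+1)$ such tuples; write $\partial(a)=\{i^{(a)}_1,\dots,i^{(a)}_k\}$ and $\bm x^{(a)}=(x_{i^{(a)}_1},\dots,x_{i^{(a)}_k})$. A planted input $\bm x^*$ is chosen uniformly from $[q]^n$, independently, and $\bm y_a:=f_a(\bm x^{*(a)})$ for $a\in[m]$. $(r-1)$-wise independence: if $X_1,\dots,X_k$ are i.i.d. uniform on $[q]$, then for every $T\subseteq[k]$ with $|T|\le r-1$ the joint distribution of $((X_i)_{i\in T}, f(X_1,\dots,X_k))$ is uniform on $[q]^{|T|}\times[q]^l$. The LP (local marginal polytope relaxation with the first $u(n)$ variables fixed to planted values): the variables are probability distributions $b_i$ on $[q]$ for $i\in[n]$ and $b_{(a)}$ on $[q]^k$ for $a\in[m]$, subject to (i) for every $a\in[m]$ and every position $s\in[k]$, the marginal of $b_{(a)}$ on its $s$-th coordinate equals $b_{i^{(a)}_s}$; (ii) $b_i(x^*_i)=1$ for $i=1,\dots,u(n)$. The objective to minimize is $\sum_{a=1}^m\sum_{\bm x\in[q]^k} b_{(a)}(\bm x)\,\mathbb I\{f_a(\bm x)\ne\bm y_a\}$. A zero-optimal solution is a feasible point with objective value $0$ (one exists, given by the planted assignment). The integral part of a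 feasible point is $\{i\in[n]:\exists x\in[q],\ b_i(x)=1\}$. *)

From Stdlib Require Import Reals ZArith.
From mathcomp Require Import all_boot.

Set Implicit Arguments.
Unset Strict Implicit.
Unset Printing Implicit Defensive.

Local Open Scope R_scope.

Definition Rsum (I : finType) (P : pred I) (F : I -> R) : R :=
  \big[Rplus/0]_(i | P i) F i.

Definition surj_loc (q k l : nat)
  (f : {ffun 'I_k -> 'I_q} -> {ffun 'I_l -> 'I_q}) : Prop :=
  forall y, exists x, f x = y.

(* t-wise independence: for X uniform on [q]^k and every T with |T| <= t,
   ((X_i)_{i in T}, f X) is uniform on [q]^|T| x [q]^l, i.e. for every
   assignment z (only its values on T matter) and output y,
     #{x | x_T = z_T, f x = y} / q^k = q^{-|T|} q^{-l}. *)
Definition wise_indep (q k l t : nat)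
  (f : {ffun 'I_k -> 'I_q} -> {ffun 'I_l -> 'I_q}) : Prop :=
  forall (T : {set 'I_k}), (#|T| <= t)%N ->
  forall (z : {ffun 'I_k -> 'I_q}) (y : {ffun 'I_l -> 'I_q}),
    (#|[set x : {ffun 'I_k -> 'I_q} |
          [forall i in T, x i == z i] && (f x == y)]| * q ^ #|T| * q ^ l
     = q ^ k)%N.

Definition mu_c (k r : nat) : R :=
  / INR 'C(k, r) * (INR (r - 2) ^ (r - 2) / (INR r * INR (r - 1) ^ (r - 1))).

Definition m_of (mu : R) (r : nat) (u : nat -> nat) (n : nat) : nat :=
  Z.to_nat (Int_part (mu * INR n ^ (r - 1) / INR (u n) ^ (r - 2))).

(* Sample space: for each a in [m] a k-tuple of pairwise distinct elements
   of [n] (an injective map [k] -> [n]), together with the planted input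
   x* in [q]^n.  The product of uniform measures is the uniform measure on
   this finite set. *)
Definition sample_space (q n k m : nat) :
  {set {ffun 'I_m -> {ffun 'I_k -> 'I_n}} * {ffun 'I_n -> 'I_q}} :=
  [set w : {ffun 'I_m -> {ffun 'I_k -> 'I_n}} * {ffun 'I_n -> 'I_q} | [forall a : 'I_m, injectiveb (w.1 a)]].

Definition restrict (q n k : nat) (x : {ffun 'I_n -> 'I_q})
  (t : {ffun 'I_k -> 'I_n}) : {ffun 'I_k -> 'I_q} :=
  [ffun s => x (t s)].

Definition lp_feasible (q n k m u : nat)
  (tup : {ffun 'I_m -> {ffun 'I_k -> 'I_n}}) (xs : {ffun 'I_n -> 'I_q})
  (bv : 'I_n -> 'I_q -> R) (bc : 'I_m -> {ffun 'I_k -> 'I_q} -> R) : Prop :=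
  (forall i x, 0 <= bv i x) /\
  (forall i, Rsum predT (bv i) = 1) /\
  (forall a x, 0 <= bc a x) /\
  (forall a, Rsum predT (bc a) = 1) /\
  (forall a (s : 'I_k) (z : 'I_q),
      Rsum (fun x : {ffun 'I_k -> 'I_q} => x s == z) (bc a) = bv (tup a s) z) /\
  (forall i : 'I_n, (i < u)%N -> bv i (xs i) = 1).

Definition lp_objective (q n k l m : nat)
  (F : nat -> {ffun 'I_k -> 'I_q} -> {ffun 'I_l -> 'I_q})
  (tup : {ffun 'I_m -> {ffun 'I_k -> 'I_n}}) (xs : {ffun 'I_n -> 'I_q})
  (bc : 'I_m -> {ffun 'I_k -> 'I_q} -> R) : R :=
  Rsum predT (fun a : 'I_m =>
    Rsum predT (fun x : {ffun 'I_k -> 'I_q} =>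
      bc a x * (if F (nat_of_ord a) x != F (nat_of_ord a) (restrict xs (tup a))
                then 1 else 0))).

Definition in_integral_part (q n : nat) (bv : 'I_n -> 'I_q -> R) (i : 'I_n) : Prop :=
  exists x, bv i x = 1.

Definition lp_small_zero_opt (q n k l m u : nat)
  (F : nat -> {ffun 'I_k -> 'I_q} -> {ffun 'I_l -> 'I_q})
  (tup : {ffun 'I_m -> {ffun 'I_k -> 'I_n}}) (xs : {ffun 'I_n -> 'I_q})
  (bound : R) : Prop :=
  exists (bv : 'I_n -> 'I_q -> R) (bc : 'I_m -> {ffun 'I_k -> 'I_q} -> R),
    lp_feasible u tup xs bv bc /\
    lp_objective F tup xs bc = 0 /\
    exists S : {set 'I_n},
      (forall i, in_integral_part bv i <-> i \in S) /\ INR #|S| < bound.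

(* Call a set S of input positions closed (for the given constraint tuples) if
   every constraint with at least r - 1 of its positions in S has all of them in
   S.  For a closed S containing the u fixed positions, the LP has a
   zero-optimal point with integral part exactly S: put the planted value on
   the positions of S and the uniform distribution elsewhere, and give each
   constraint not contained in S the uniform distribution on the assignments
   that agree with the planted input on S and produce the observed output.
   Such a constraint has fewer than r - 1 positions in S, so (r - 1)-wise
   independence makes its marginals uniform off S.

   It remains to bound the probability that the closure of the first u
   positions reaches s = (1 + 1/(r-2)) u.  Explore the closure one constraint
   at a time: a constraint is revealed once it meets the current set in r - 1
   places, and then adds at most k - r + 1 positions.  Weighting each
   exploration state by exp (-lam (s - |S|) / (k - r + 1)) bounds the fraction
   of bad tuple families by exp (m H (e^lam - 1) - lam u / ((r-2)(k-r+1))),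
   where H ~ binom(k, r-1) (s/n)^(r-1) is the chance that a random constraint
   meets a set of size s in r - 1 places.  Here m H ~ alpha u with
   alpha = mu binom(k, r-1) (1 + 1/(r-2))^(r-1), and mu < mu_c(k, r) is exactly
   alpha < beta := 1/((r-2)(k-r+1)); taking e^lam = beta/alpha' for
   alpha < alpha' < beta makes the exponent -c u with c > 0. *)

From HB Require Import structures.
From Stdlib Require Import Reals ZArith Lra Lia.
From mathcomp Require Import all_boot zify.

Set Implicit Arguments.
Unset Strict Implicit.
Unset Printing Implicit Defensive.

Local Open Scope R_scope.

HB.instance Definition _ := Monoid.isComLaw.Build R 0 Rplus
  (fun a b c => esym (Rplus_assoc a b c)) Rplus_comm Rplus_0_l.
HB.instance Definition _ := Monoid.isComLaw.Build R 1 Rmult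
  (fun a b c => esym (Rmult_assoc a b c)) Rmult_comm Rmult_1_l.

Lemma iter_Rplus (c : R) j : iter j (Rplus c) 0 = INR j * c.
Proof. by elim: j => [|j IH]; [rewrite /=; lra | rewrite iterS IH S_INR; lra]. Qed.

Lemma iter_Rmult (c : R) j : iter j (Rmult c) 1 = c ^ j.
Proof. by elim: j => //= j ->. Qed.

Lemma big_Rplus_const (I : finType) (P : pred I) c :
  \big[Rplus/0]_(i | P i) c = INR #|[set i | P i]| * c.
Proof. by rewrite -iter_Rplus -big_const; apply: eq_bigl => i; rewrite inE. Qed.

Lemma big_Rplus_indicator (I : finType) (P Q : pred I) c :
  \big[Rplus/0]_(i | P i) (if Q i then c else 0) = INR #|[set i | P i && Q i]| * c.
Proof. by rewrite -big_mkcondr big_Rplus_const. Qed.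

Lemma big_Rplus_le (I : finType) (P : pred I) (f g : I -> R) :
  (forall i, P i -> f i <= g i) ->
  \big[Rplus/0]_(i | P i) f i <= \big[Rplus/0]_(i | P i) g i.
Proof. by move=> fg; elim/big_ind2: _ => // *; lra. Qed.

Lemma big_Rmult_le (I : finType) (P : pred I) (f g : I -> R) :
  (forall i, P i -> 0 <= f i <= g i) ->
  0 <= \big[Rmult/1]_(i | P i) f i <= \big[Rmult/1]_(i | P i) g i.
Proof.
move=> fg; elim/big_ind2: _ => //; first lra.
by move=> x1 x2 y1 y2 [? ?] [? ?]; split; nra.
Qed.

Lemma big_Rmult_ge0 (I : finType) (P : pred I) (f : I -> R) :
  (forall i, P i -> 0 <= f i) -> 0 <= \big[Rmult/1]_(i | P i) f i.
Proof. by move=> f0; case: (@big_Rmult_le I P f f) => // i /f0; lra. Qed.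

Lemma INR_sum (I : finType) (P : pred I) (f : I -> nat) :
  INR (\sum_(i | P i) f i)%N = \big[Rplus/0]_(i | P i) INR (f i).
Proof. by apply: (big_morph INR) => // x y; rewrite plus_INR. Qed.

Lemma INR_prod (I : finType) (P : pred I) (f : I -> nat) :
  INR (\prod_(i | P i) f i)%N = \big[Rmult/1]_(i | P i) INR (f i).
Proof. by apply: (big_morph INR) => // x y; rewrite mult_INR. Qed.

Lemma INR_expn a j : INR (a ^ j)%N = INR a ^ j.
Proof. by elim: j => [|j IH]; rewrite ?expnS ?mult_INR ?IH. Qed.

Lemma exp_le x y : x <= y -> exp x <= exp y.
Proof. by case/Rle_lt_or_eq_dec => [/exp_increasing|->]; lra. Qed.

Lemma exp_ge1 x : 0 <= x -> 1 <= exp x.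
Proof. by have := exp_ineq1_le x; lra. Qed.

Lemma pow_le_exp x j : 0 <= x -> (1 + x) ^ j <= exp (INR j * x).
Proof.
move=> x0; elim: j => [|j IH]; first by rewrite /= Rmult_0_l exp_0; lra.
rewrite S_INR Rmult_plus_distr_r Rmult_1_l exp_plus /= Rmult_comm.
have := exp_ineq1_le x; have := pow_le (1 + x) j; nra.
Qed.

Lemma INR_floor_le x : 0 <= x -> INR (Z.to_nat (Int_part x)) <= x.
Proof.
move=> x0; have [? _] := base_Int_part x.
case: (Z.le_gt_cases 0 (Int_part x)) => h; first by rewrite INR_IZR_INZ Z2Nat.id.
by move: h; case: (Int_part x) => //= *; lra.
Qed.

Lemma card_family_set (aT rT : finType) (F : aT -> pred rT) :
  #|[set w : {ffun aT -> rT} | [forall a, w a \in F a]]| = (\prod_a #|F a|)%N.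
Proof.
have -> : (\prod_a #|F a| = #|family F|)%N.
  by rewrite card_family foldrE big_map big_enum.
by apply: eq_card => w; rewrite !inE; apply/forallP/familyP.
Qed.

Lemma card_bigcup_le (I T : finType) (P : pred I) (F : I -> {set T}) :
  (#|\bigcup_(i | P i) F i| <= \sum_(i | P i) #|F i|)%N.
Proof.
elim/big_rec2: _ => [|i X y _ h]; first by rewrite cards0.
by apply: leq_trans (leq_card_setU _ _) _; rewrite leq_add2l.
Qed.

Lemma exists_subset_card (T : finType) (A : {set T}) j :
  (j <= #|A|)%N -> exists B : {set T}, B \subset A /\ #|B| = j.
Proof.
move=> jA; exists [set x in take j (enum A)]; split.
  by apply/subsetP => x; rewrite inE => /mem_take; rewrite mem_enum.
rewrite cardsE (card_uniqP _) ?take_uniq ?enum_uniq // size_take -cardE.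
by case: ltnP => // Aj; apply/eqP; rewrite eqn_leq Aj jA.
Qed.

Lemma card_ord_prefix_le n j : (#|[set i : 'I_n | (i < j)%N]| <= j)%N.
Proof.
rewrite cardE -(size_map val) -[X in (_ <= X)%N](size_iota 0 j).
apply: uniq_leq_size; first by rewrite map_inj_uniq ?enum_uniq //; exact: val_inj.
by move=> x /mapP [i]; rewrite mem_enum inE => ? ->; rewrite mem_iota.
Qed.

Lemma card_pairs_fst (A B : finType) (P : pred A) :
  #|[set w : A * B | P w.1]| = (#|[set x | P x]| * #|B|)%N.
Proof.
rewrite -cardsT -cardsX; apply: eq_card => -[x y].
by rewrite !inE andbT.
Qed.

(** * Hit closure *)

Section Closure.

Variables (n k m rr : nat).

Notation tuple := {ffun 'I_k -> 'I_n}.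

Implicit Types (S X : {set 'I_n}) (v : tuple) (w : {ffun 'I_m -> tuple}).

Definition hits S v : bool := (rr <= #|[set i | v i \in S]|)%N.

Definition vars v : {set 'I_n} := [set v i | i : 'I_k].

Definition hit_closed w S := [forall a, hits S (w a) ==> (vars (w a) \subset S)].

Definition hit_closure w S : {set 'I_n} :=
  \bigcap_(X : {set 'I_n} | (S \subset X) && hit_closed w X) X.

Lemma hitsS S S' v : S \subset S' -> hits S v -> hits S' v.
Proof.
move=> SS' /leq_trans; apply; apply: subset_leq_card.
by apply/subsetP => i; rewrite !inE => /(subsetP SS').
Qed.

Lemma subset_hit_closure w S : S \subset hit_closure w S.
Proof. by apply/bigcapsP => X /andP[]. Qed.

Lemma hit_closure_min w S X : S \subset X -> hit_closed w X -> hit_closure w S \subset X.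
Proof. by move=> SX cX; apply: bigcap_inf; rewrite SX cX. Qed.

Lemma hit_closure_closed w S : hit_closed w (hit_closure w S).
Proof.
apply/forallP => a; apply/implyP => ha; apply/bigcapsP => X /andP[SX cX].
move/forallP: (cX) => /(_ a) /implyP; apply; apply: hitsS ha.
exact: hit_closure_min SX cX.
Qed.

Lemma hit_closure_id w S : hit_closed w S -> hit_closure w S = S.
Proof. by move=> cS; apply/eqP; rewrite eqEsubset hit_closure_min ?subset_hit_closure //. Qed.

Lemma hit_closureU_vars w S a : hits S (w a) -> hit_closure w (S :|: vars (w a)) = hit_closure w S.
Proof.
move=> ha; apply/eqP; rewrite eqEsubset; apply/andP; split.
  apply: hit_closure_min (hit_closure_closed _ _); rewrite subUset subset_hit_closure /=.
  move/forallP: (hit_closure_closed w S) => /(_ a) /implyP; apply.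
  exact: hitsS (subset_hit_closure _ _) ha.
apply: hit_closure_min (hit_closure_closed _ _).
exact: subset_trans (subsetUl _ _) (subset_hit_closure _ _).
Qed.

Lemma card_setU_vars S v : hits S v -> (#|S :|: vars v| <= #|S| + (k - rr))%N.
Proof.
rewrite /hits => hv.
have -> : S :|: vars v = S :|: (v @: ~: [set i | v i \in S]).
  apply/setP => x; rewrite !inE; case xS: (x \in S) => //=.
  apply/imsetP/imsetP => -[i _ ex]; exists i => //.
  by rewrite !inE -ex xS.
apply: leq_trans (leq_card_setU _ _) _; rewrite leq_add2l.
apply: leq_trans (leq_imset_card _ _) _.
by have := cardsC [set i | v i \in S]; rewrite card_ord; lia.
Qed.

Lemma card_hits_le X : (rr <= k)%N ->
  (#|[set v | hits X v]| <= 'C(k, rr) * #|X| ^ rr * n ^ (k - rr))%N.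
Proof.
move=> rr_k.
pose maps_into (R : {set 'I_k}) := [set v : tuple |
  [forall i, v i \in (if i \in R then [pred x | x \in X] else predT)]].
have cover : [set v | hits X v] \subset
    \bigcup_(R in [set R : {set 'I_k} | #|R| == rr]) maps_into R.
  apply/subsetP => v; rewrite inE /hits => /exists_subset_card [R [RX cR]].
  apply/bigcupP; exists R; first by rewrite inE cR.
  rewrite inE; apply/forallP => i; case iR: (i \in R) => //.
  by move/subsetP: RX => /(_ i iR); rewrite !inE.
have card_maps_into R : R \in [set R : {set 'I_k} | #|R| == rr] ->
    #|maps_into R| = (#|X| ^ rr * n ^ (k - rr))%N.
  rewrite inE => /eqP cR; rewrite card_family_set (bigID (mem R)) /=.
  rewrite (eq_bigr (fun _ => #|X|)); last by move=> i ->; apply: eq_card => x.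
  rewrite [X in (_ * X)%N](eq_bigr (fun _ => n)); last first.
    by move=> i /negbTE ->; rewrite cardT size_enum_ord.
  rewrite !prod_nat_const cR (@eq_card _ _ (~: R)); last by move=> i; rewrite inE.
  by congr (_ * _ ^ _)%N; have := cardsC R; rewrite card_ord; lia.
apply: leq_trans (subset_leq_card cover) _; apply: leq_trans (card_bigcup_le _ _) _.
by rewrite (eq_bigr _ card_maps_into) sum_nat_const card_draws card_ord mulnA.
Qed.

End Closure.

(** * A zero-optimal point with a closed integral part *)

Section ZeroOptimalPoint.

Variables (q n k l m r u : nat) (F : nat -> {ffun 'I_k -> 'I_q} -> {ffun 'I_l -> 'I_q}).
Variables (tup : {ffun 'I_m -> {ffun 'I_k -> 'I_n}}) (xs : {ffun 'I_n -> 'I_q}).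
Variable S : {set 'I_n}.
Hypothesis q_ge2 : (2 <= q)%N.
Hypothesis F_indep : forall a : nat, wise_indep (r - 1) (F a).
Hypothesis S_closed : hit_closed (r - 1)%N tup S.
Hypothesis S_fixed : forall i : 'I_n, (i < u)%N -> i \in S.

Notation assignment := {ffun 'I_k -> 'I_q}.

Definition fixed_pos (a : 'I_m) := [set s : 'I_k | tup a s \in S].
Definition planted (a : 'I_m) := restrict xs (tup a).
Definition observed (a : 'I_m) := F a (planted a).
Definition inside (a : 'I_m) := [forall s, tup a s \in S].
Definition agrees (a : 'I_m) (x : assignment) := [forall s in fixed_pos a, x s == planted a s].
Definition consistent (a : 'I_m) :=
  [set x : assignment | agrees a x && (F a x == observed a)].

Definition point_var (i : 'I_n) (x : 'I_q) : R :=
  if i \in S then (if x == xs i then 1 else 0) else / INR q.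
Definition point_con (a : 'I_m) (x : assignment) : R :=
  if inside a then (if x == planted a then 1 else 0)
  else (if agrees a x && (F a x == observed a) then / INR #|consistent a| else 0).

Lemma q_gt0 : 0 < INR q.
Proof. by apply: lt_0_INR; apply/ltP; exact: leq_trans q_ge2. Qed.

Lemma plantedE a s : planted a s = xs (tup a s).
Proof. by rewrite ffunE. Qed.

Lemma agrees_at a x s : agrees a x -> tup a s \in S -> x s = planted a s.
Proof. by move=> /forallP /(_ s) /implyP ag sS; apply/eqP; apply: ag; rewrite inE. Qed.

Lemma card_fixed_pos_lt a : ~~ inside a -> (#|fixed_pos a| < r - 1)%N.
Proof.
move=> out; rewrite ltnNge; apply: contra out => many.
move/forallP: S_closed => /(_ a) /implyP /(_ many) /subsetP varsS.
by apply/forallP => s; apply: varsS; apply/imsetP; exists s.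
Qed.

Lemma card_consistent a : ~~ inside a ->
  (#|consistent a| * q ^ #|fixed_pos a| * q ^ l = q ^ k)%N.
Proof.
by move=> out; have := F_indep a (ltnW (card_fixed_pos_lt out)) (planted a) (observed a).
Qed.

Lemma consistent_gt0 a : ~~ inside a -> 0 < INR #|consistent a|.
Proof.
move=> /card_consistent; case: #|consistent a| => [|c _]; last by apply: lt_0_INR; lia.
rewrite !mul0n => /esym /eqP; rewrite expn_eq0 => /andP[/eqP q0 _].
by move: q_ge2; rewrite q0.
Qed.

(* (r - 1)-wise independence applied to the positions [s |: fixed_pos a]. *)
Lemma card_consistent_at a s z : ~~ inside a -> tup a s \notin S ->
  (#|[set x : assignment | (x s == z) && (agrees a x && (F a x == observed a))]| * q =
   #|consistent a|)%N.
Proof.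
move=> out sS; have s_free : s \notin fixed_pos a by rewrite inE.
pose z' := [ffun i => if i == s then z else planted a i].
have card_le : (#|s |: fixed_pos a| <= r - 1)%N.
  by rewrite cardsU1 s_free add1n; exact: card_fixed_pos_lt.
have := F_indep a card_le z' (observed a).
have -> : [set x : assignment |
             [forall i in s |: fixed_pos a, x i == z' i] && (F a x == observed a)]
          = [set x : assignment | (x s == z) && (agrees a x && (F a x == observed a))].
  apply/setP => x; rewrite !inE andbA; congr (_ && _).
  apply/forallP/andP => [h|[/eqP xs_z /forallP ag] i].
    split; first by have := h s; rewrite !inE eqxx ffunE eqxx.
    apply/forallP => i; apply/implyP => ifix; have := h i.
    rewrite in_setU1 ifix orbT /= ffunE.
    by case: (i =P s) => [ei|//]; rewrite ei (negbTE s_free) in ifix.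
  rewrite in_setU1 ffunE; case: (i =P s) => [->|_] /=; first by rewrite xs_z eqxx.
  exact: ag.
rewrite cardsU1 s_free add1n expnS => hM.
have q_pos : (0 < q ^ #|fixed_pos a| * q ^ l)%N by rewrite muln_gt0 !expn_gt0 (leq_trans _ q_ge2).
apply/eqP; rewrite -(eqn_pmul2r q_pos) !mulnA card_consistent //.
by rewrite -hM !mulnA [(_ * q * _)%N]mulnC !mulnA.
Qed.

Lemma point_var_sum i : Rsum predT (point_var i) = 1.
Proof.
rewrite /Rsum /point_var; case: (i \in S).
  by rewrite (bigD1 (xs i)) //= eqxx big1 => [|x]; [lra | case: eqP].
rewrite big_Rplus_const (@eq_card _ _ predT) ?cardT ?size_enum_ord => [|x]; last by rewrite inE.
by have q0 := q_gt0; field; lra.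
Qed.

Lemma point_con_sum a : Rsum predT (point_con a) = 1.
Proof.
rewrite /Rsum /point_con; case: (boolP (inside a)) => [_|out].
  by rewrite (bigD1 (planted a)) //= eqxx big1 => [|x]; [lra | case: eqP].
rewrite big_Rplus_indicator (@eq_card _ _ (consistent a)) => [|x]; last by rewrite !inE.
by have c0 := consistent_gt0 out; field; lra.
Qed.

Lemma point_con_marginal a s z :
  Rsum (fun x : assignment => x s == z) (point_con a) = point_var (tup a s) z.
Proof.
rewrite /Rsum /point_con /point_var.
case: (boolP (inside a)) => [/forallP /(_ s) sS|out].
  rewrite sS big_Rplus_indicator Rmult_1_r; case: (z =P xs (tup a s)) => [->|nz].
    rewrite (@eq_card _ _ (pred1 (planted a))) ?card1 => [|x]; first by rewrite /=; lra.
    by rewrite !inE andbC; case: eqP => // ->; rewrite plantedE eqxx.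
  rewrite eq_card0 => [|x]; first by rewrite /=; lra.
  by rewrite !inE; apply/negP => /andP[/eqP xz /eqP xp]; apply: nz; rewrite -xz xp plantedE.
rewrite big_Rplus_indicator; have cons0 := consistent_gt0 out.
case: ifP => [sS|/negbT sS].
  case: (z =P xs (tup a s)) => [->|nz].
    rewrite (@eq_card _ _ (consistent a)) => [|x]; first by field; lra.
    rewrite !inE; case ag: (agrees a x); rewrite ?andbF //=.
    by rewrite (agrees_at ag sS) plantedE eqxx.
  rewrite eq_card0 => [|x]; first by rewrite /=; lra.
  rewrite !inE; apply/negP => /andP[/eqP xz /andP[ag _]]; apply: nz.
  by rewrite -xz (agrees_at ag sS) plantedE.
rewrite -(card_consistent_at z out sS) mult_INR in cons0 *.
rewrite Rinv_mult -Rmult_assoc Rinv_r ?Rmult_1_l //; apply: Rgt_not_eq.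
by apply: (Rmult_lt_reg_r (INR q) _ _ q_gt0); rewrite Rmult_0_l.
Qed.

Lemma point_objective : lp_objective F tup xs point_con = 0.
Proof.
rewrite /lp_objective /Rsum big1 // => a _; rewrite big1 // => x _.
rewrite /point_con; case: ifP => _.
  by case: eqP => [->|_]; rewrite ?eqxx /=; lra.
by case: ifP => [/andP[_ /eqP ->]|_]; rewrite ?eqxx /=; lra.
Qed.

Lemma integral_point_var i : in_integral_part point_var i <-> i \in S.
Proof.
split=> [[x]|iS]; last by exists (xs i); rewrite /point_var iS eqxx.
rewrite /point_var; case: (i \in S) => // inv_q.
have q2 : INR 2 <= INR q by apply: le_INR; apply/leP.
have : / INR q * INR q = 1 by apply: Rinv_l; rewrite /= in q2; lra.
by rewrite inv_q /= in q2 *; lra.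
Qed.

Lemma lp_small_zero_opt_of_closed bound :
  INR #|S| < bound -> lp_small_zero_opt u F tup xs bound.
Proof.
move=> S_small; exists point_var, point_con; split; [|split].
- split; [|split; [|split; [|split; [|split]]]].
  + move=> i x; rewrite /point_var; case: (i \in S); first by case: (x == xs i); lra.
    by have := Rinv_0_lt_compat _ q_gt0; lra.
  + exact: point_var_sum.
  + move=> a x; rewrite /point_con; case: ifP => [_|/negbT out]; first by case: (x == _); lra.
    by case: ifP => _; [have := Rinv_0_lt_compat _ (consistent_gt0 out)|]; lra.
  + exact: point_con_sum.
  + exact: point_con_marginal.
  + by move=> i /S_fixed iS; rewrite /point_var iS eqxx.
- exact: point_objective.
- by exists S; split=> // i; exact: integral_point_var.
Qed.

End ZeroOptimalPoint.

(** * Counting families with a large closure *)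

Section Exploration.

Variables (n k m rr : nat) (Inj : {set {ffun 'I_k -> 'I_n}}) (lam s H : R).

Notation tuple := {ffun 'I_k -> 'I_n}.
Notation family := {ffun 'I_m -> tuple}.

Definition n_hitters (X : {set 'I_n}) : nat := #|Inj :&: [set v | hits rr X v]|.

Lemma n_hitters_le_pow (X : {set 'I_n}) (x : R) : (rr <= k)%N -> INR #|X| <= x ->
  INR (n_hitters X) <= INR 'C(k, rr) * x ^ rr * INR n ^ (k - rr).
Proof.
move=> rr_k X_le; have : (n_hitters X <= 'C(k, rr) * #|X| ^ rr * n ^ (k - rr))%N.
  by apply: leq_trans (card_hits_le X rr_k); apply/subset_leq_card/subsetIr.
move/leP/le_INR; rewrite !mult_INR !INR_expn => /Rle_trans; apply.
apply: Rmult_le_compat_r; first exact/pow_le/pos_INR.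
by apply: Rmult_le_compat_l; [exact: pos_INR | apply: pow_incr; split; [exact: pos_INR | lra]].
Qed.

Hypothesis lam_ge0 : 0 <= lam.
Hypothesis rr_lt_k : (rr < k)%N.
Hypothesis few_hitters :
  forall X : {set 'I_n}, INR #|X| < s -> INR (n_hitters X) <= H * INR #|Inj|.

(* An exploration state: [S] is the set reached so far, [V a] is the revealed
   tuple of slot [a] (if any), and an unrevealed slot [a] is only known not to
   hit [St a]. *)
Implicit Types (S X : {set 'I_n}) (V : 'I_m -> option tuple) (St : 'I_m -> {set 'I_n}).

Definition avoiders X : {set tuple} := Inj :\: [set v | hits rr X v].

Definition slot_range V St a : {set tuple} :=
  if V a is Some v then [set v] else avoiders (St a).

Definition large_closure S V St : {set family} :=
  [set w : family | [forall a, w a \in slot_range V St a] &&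
                    ~~ Rlt_dec (INR #|hit_closure rr w S|) s].

(* An unrevealed tuple that may still hit [S] is charged [exp lam] instead of
   [1]: revealing it adds at most [k - rr] elements to [S], which [potential]
   pays for. *)
Definition slot_weight V St a : R :=
  if V a is Some _ then 1 else
  INR #|Inj| - INR (n_hitters (St a)) +
  (H * INR #|Inj| - INR (n_hitters (St a))) * (exp lam - 1).

Definition potential S : R := exp (- lam * ((s - INR #|S|) / INR (k - rr))).

Definition exploration_inv S V St :=
  (forall a v, V a = Some v -> vars v \subset S) /\
  (forall a, V a = None -> St a \subset S /\ INR (n_hitters (St a)) <= H * INR #|Inj|).

Definition exploration_size S V St : nat :=
  ((n - #|S|) * (2 * m + 1) + #|[set a | V a == None]| +
   #|[set a | (V a == None) && (St a != S)]|)%N.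

Definition new_hitters S X : {set tuple} :=
  (Inj :&: [set v | hits rr S v]) :\: [set v | hits rr X v].

Lemma card_avoiders X : (n_hitters X + #|avoiders X|)%N = #|Inj|.
Proof. exact: cardsID. Qed.

Lemma card_new_hitters S X : X \subset S ->
  (n_hitters X + #|new_hitters S X|)%N = n_hitters S.
Proof.
move=> XS; rewrite /n_hitters -(cardsID [set v | hits rr X v] (Inj :&: [set v | hits rr S v])).
congr (_ + _)%N; apply: eq_card => v; rewrite !inE -andbA.
by case hit: (hits rr X v); rewrite ?andbF // (hitsS XS hit).
Qed.

Lemma slot_weight_ge_card S V St a :
  exploration_inv S V St -> 0 <= INR #|slot_range V St a| <= slot_weight V St a.
Proof.
case=> _ inv_none; split; first exact: pos_INR.
rewrite /slot_weight /slot_range; case Va: (V a) => [v|]; first by rewrite cards1 /=; lra.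
have [_ hitH] := inv_none a Va; have := exp_ge1 lam_ge0 => e1.
have : 0 <= (H * INR #|Inj| - INR (n_hitters (St a))) * (exp lam - 1).
  by apply: Rmult_le_pos; lra.
by have := card_avoiders (St a) => /(f_equal INR); rewrite plus_INR; lra.
Qed.

Lemma card_large_le_weights S V St : exploration_inv S V St ->
  INR #|large_closure S V St| <= \big[Rmult/1]_a slot_weight V St a.
Proof.
move=> inv; apply: Rle_trans (_ : INR (\prod_a #|slot_range V St a|) <= _).
  apply/le_INR/leP; rewrite -card_family_set; apply: subset_leq_card.
  by apply/subsetP => w; rewrite !inE => /andP[].
rewrite INR_prod; case: (@big_Rmult_le _ predT (fun a => INR #|slot_range V St a|)
  (slot_weight V St)) => // a _; exact: slot_weight_ge_card a inv.
Qed.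

Lemma large_closure_settled S V St : INR #|S| < s -> exploration_inv S V St ->
  (forall a, V a = None -> St a = S) -> large_closure S V St = set0.
Proof.
move=> S_small [inv_some _] settled; apply/setP => w; rewrite !inE.
apply/negbTE; apply/negP => /andP[/forallP w_range].
suff /hit_closure_id -> : hit_closed rr w S by case: Rlt_dec.
apply/forallP => a; apply/implyP => hit; move: (w_range a); rewrite /slot_range.
case Va: (V a) => [v|]; first by rewrite inE => /eqP ->; exact: inv_some Va.
by rewrite (settled a Va) !inE hit.
Qed.

Lemma large_closure_split S V St a : V a = None ->
  large_closure S V St \subset
    large_closure S V [eta St with a |-> S] :|:
    \bigcup_(v in new_hitters S (St a)) large_closure (S :|: vars v) [eta V with a |-> Some v] St.
Proof.
move=> Va; apply/subsetP => w; rewrite inE => /andP[/forallP w_range large].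
have := w_range a; rewrite /slot_range Va !inE => /andP[not_hit_St w_inj].
case hitS: (hits rr S (w a)); apply/orP; [right|left].
  apply/bigcupP; exists (w a); first by rewrite !inE not_hit_St w_inj hitS.
  rewrite inE hit_closureU_vars // large andbT; apply/forallP => b.
  by rewrite /slot_range /=; case: (b =P a) => [->|_]; [rewrite inE | exact: w_range].
rewrite large andbT; apply/forallP => b.
by rewrite /slot_range /=; case: (b =P a) => [->|_]; [rewrite Va !inE w_inj hitS | exact: w_range].
Qed.

Lemma slot_weight_settle S V St a : V a = None -> St a \subset S ->
  slot_weight V [eta St with a |-> S] a + INR #|new_hitters S (St a)| * exp lam =
  slot_weight V St a.
Proof.
move=> Va StS; rewrite /slot_weight Va /= eqxx.
have := card_new_hitters StS => /(f_equal INR); rewrite plus_INR => <-.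
set x := INR #|new_hitters _ _|; set y := INR #|Inj|; ring.
Qed.

Lemma potential_reveal S (v : tuple) :
  hits rr S v -> potential (S :|: vars v) <= potential S * exp lam.
Proof.
move=> /card_setU_vars /leP /le_INR; rewrite plus_INR => grow.
have d_gt0 : 0 < INR (k - rr) by apply/lt_0_INR/ltP; rewrite subn_gt0.
have step : (INR #|S :|: vars v| - INR #|S|) / INR (k - rr) <= 1.
  apply: (Rmult_le_reg_r (INR (k - rr))) => //.
  by rewrite /Rdiv Rmult_assoc Rinv_l; lra.
rewrite /potential -exp_plus; apply: exp_le.
have -> : - lam * ((s - INR #|S :|: vars v|) / INR (k - rr)) =
          - lam * ((s - INR #|S|) / INR (k - rr)) +
          lam * ((INR #|S :|: vars v| - INR #|S|) / INR (k - rr)) by field; lra.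
by have := Rmult_le_compat_l lam _ _ lam_ge0 step; lra.
Qed.

Lemma exploration_inv_settle S V St a : INR #|S| < s ->
  exploration_inv S V St -> exploration_inv S V [eta St with a |-> S].
Proof.
move=> S_small [inv_some inv_none]; split=> // b /=.
by case: eqP => [_ _|_]; [split; [exact: subxx | exact: few_hitters] | exact: inv_none].
Qed.

Lemma exploration_inv_reveal S V St a (v : tuple) : exploration_inv S V St ->
  exploration_inv (S :|: vars v) [eta V with a |-> Some v] St.
Proof.
case=> inv_some inv_none; split=> b /=; case: eqP => _.
- by move=> v' [<-]; exact: subsetUr.
- by move=> v' /inv_some /subset_trans; apply; exact: subsetUl.
- by [].
- by move=> /inv_none [StS hitH]; split=> //; exact: subset_trans StS (subsetUl _ _).
Qed.

Lemma exploration_size_settle S V St a : V a = None -> St a != S ->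
  (exploration_size S V [eta St with a |-> S] < exploration_size S V St)%N.
Proof.
move=> Va StaS; rewrite /exploration_size ltn_add2l; apply: proper_card.
apply/properP; split.
  by apply/subsetP => b; rewrite !inE /=; case: (b =P a) => [->|//]; rewrite eqxx andbF.
by exists a; rewrite !inE /= ?eqxx ?Va ?StaS ?andbF.
Qed.

Lemma exploration_size_reveal S V St a (v : tuple) : V a = None ->
  (exploration_size (S :|: vars v) [eta V with a |-> Some v] St < exploration_size S V St)%N.
Proof.
move=> Va; rewrite /exploration_size.
set none' := #|[set b | [eta V with a |-> Some v] b == None]|.
set none := #|[set b | V b == None]|.
have none_lt : (none' < none)%N.
  apply: proper_card; apply/properP; split.
    apply/subsetP => b; rewrite !inE /=; by case: (b =P a).
  by exists a; rewrite !inE /= ?eqxx ?Va.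
have card_le (A : {set 'I_m}) : (#|A| <= m)%N by rewrite -[X in (_ <= X)%N]card_ord max_card.
have card_n : (#|S :|: vars v| <= n)%N by rewrite -[X in (_ <= X)%N]card_ord max_card.
have [->|grow] := eqVneq (S :|: vars v) S.
  suff : (#|[set b | ([eta V with a |-> Some v] b == None) && (St b != S)]| <=
          #|[set b | (V b == None) && (St b != S)]|)%N by lia.
  apply: subset_leq_card; apply/subsetP => b; rewrite !inE /=.
  by case: (b =P a).
have S_lt : (#|S| < #|S :|: vars v|)%N.
  by apply: proper_card; rewrite properEneq subsetUl andbT eq_sym.
have : ((n - #|S :|: vars v|).+1 * (2 * m + 1) <= (n - #|S|) * (2 * m + 1))%N.
  by apply: leq_mul => //; lia.
rewrite mulSn; set pending := #|[set b | _ & St b != S :|: vars v]|.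
have : (pending <= m)%N by apply: card_le.
set A := ((n - _) * _)%N; set B := ((n - #|S|) * _)%N; lia.
Qed.

Lemma potential_ge1 S : s <= INR #|S| -> 1 <= potential S.
Proof.
move=> S_large; apply: exp_ge1.
have d_inv : 0 < / INR (k - rr) by apply/Rinv_0_lt_compat/lt_0_INR/ltP; rewrite subn_gt0.
have := Rmult_le_compat_r _ (s - INR #|S|) 0 (Rlt_le _ _ d_inv) ltac:(lra).
by rewrite /Rdiv Rmult_0_l; nra.
Qed.

Lemma card_large_step S V St a :
  exploration_inv S V St -> V a = None -> St a \subset S ->
  INR #|large_closure S V [eta St with a |-> S]| <=
    potential S * \big[Rmult/1]_b slot_weight V [eta St with a |-> S] b ->
  (forall v, v \in new_hitters S (St a) ->
     INR #|large_closure (S :|: vars v) [eta V with a |-> Some v] St| <=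
     potential (S :|: vars v) * \big[Rmult/1]_b slot_weight [eta V with a |-> Some v] St b) ->
  INR #|large_closure S V St| <= potential S * \big[Rmult/1]_b slot_weight V St b.
Proof.
move=> inv Va StS settle_le reveal_le.
pose rest := \big[Rmult/1]_(b | b != a) slot_weight V St b.
have rest_ge0 : 0 <= rest.
  by apply: big_Rmult_ge0 => b _; have [] := slot_weight_ge_card b inv; lra.
have union_le : INR #|\bigcup_(v in new_hitters S (St a))
                       large_closure (S :|: vars v) [eta V with a |-> Some v] St| <=
                 INR #|new_hitters S (St a)| * (potential S * exp lam * rest).
  apply: Rle_trans (le_INR _ _ (leP (card_bigcup_le _ _))) _; rewrite INR_sum.
  apply: Rle_trans (_ : _ <= \big[Rplus/0]_(v in new_hitters S (St a))
                                (potential S * exp lam * rest)) _; last first.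
    by rewrite big_Rplus_const cardsE; right.
  apply: big_Rplus_le => v new; apply: Rle_trans (reveal_le v new) _.
  rewrite (bigD1 a) // {1}/slot_weight /= eqxx Rmult_1_l.
  have -> : \big[Rmult/1]_(b | b != a) slot_weight [eta V with a |-> Some v] St b = rest.
    by apply: eq_bigr => b /negbTE ba; rewrite /slot_weight /= ba.
  apply: Rmult_le_compat_r => //; apply: potential_reveal.
  by move: new; rewrite !inE => /andP[_ /andP[_]].
have rest_settle : \big[Rmult/1]_(b | b != a) slot_weight V [eta St with a |-> S] b = rest.
  by apply: eq_bigr => b /negbTE ba; rewrite /slot_weight /= ba.
move: settle_le; rewrite (bigD1 a) //= rest_settle => settle_le.
have := subset_leq_card (large_closure_split S St Va).
move/leq_trans/(_ (leq_card_setU _ _))/leP/le_INR; rewrite plus_INR => /Rle_trans; apply.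
rewrite (bigD1 a) //= -(slot_weight_settle Va StS) -/rest.
apply: Rle_trans (Rplus_le_compat _ _ _ _ settle_le union_le) _; right.
by move: (slot_weight _ _ a) => w; ring.
Qed.

Lemma card_large_le_potential S V St : exploration_inv S V St ->
  INR #|large_closure S V St| <= potential S * \big[Rmult/1]_a slot_weight V St a.
Proof.
have [N] := ubnP (exploration_size S V St); elim: N => // N IH in S V St *.
rewrite ltnS => sizeN inv.
have prod_ge0 : 0 <= \big[Rmult/1]_a slot_weight V St a.
  by apply: big_Rmult_ge0 => b _; have [] := slot_weight_ge_card b inv; lra.
have [S_small|/Rnot_lt_le S_large] := Rlt_dec (INR #|S|) s; last first.
  by have := potential_ge1 S_large; have := card_large_le_weights inv; nra.
case: (pickP (fun a => (V a == None) && (St a != S))) => [a /andP[/eqP Va StaS]|settled].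
  have [StS _] := inv.2 a Va; apply: (card_large_step inv Va StS).
    exact: IH (leq_trans (exploration_size_settle Va StaS) sizeN)
              (exploration_inv_settle a S_small inv).
  move=> v _; exact: IH (leq_trans (exploration_size_reveal S St v Va) sizeN)
                        (exploration_inv_reveal a v inv).
rewrite large_closure_settled // => [|a Va].
  by rewrite cards0 /=; apply: Rmult_le_pos => //; exact/Rlt_le/exp_pos.
by apply/eqP; have := settled a; rewrite /= Va eqxx /= => /negbFE.
Qed.

Lemma card_large_closure_le U : (0 < rr)%N -> 0 <= H ->
  INR #|[set w : family | [forall a, w a \in Inj] &&
                          ~~ Rlt_dec (INR #|hit_closure rr w U|) s]| <=
  INR #|Inj| ^ m *
  exp (INR m * (H * (exp lam - 1)) - lam * ((s - INR #|U|) / INR (k - rr))).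
Proof.
move=> rr_gt0 H_ge0.
have no_hit v : hits rr set0 v = false.
  rewrite /hits (_ : [set i | v i \in set0] = set0) ?cards0; last by apply/setP => i; rewrite !inE.
  by rewrite leqn0; move: rr_gt0; case: rr.
have n_hitters0 : n_hitters set0 = 0%N by apply: eq_card0 => v; rewrite !inE no_hit andbF.
have init : exploration_inv U (fun _ => None) (fun _ => set0).
  split=> // a _; split; first exact: sub0set.
  by rewrite n_hitters0 /=; apply: Rmult_le_pos => //; exact: pos_INR.
have := card_large_le_potential init.
have -> : large_closure U (fun _ => None) (fun _ => set0) =
          [set w : family | [forall a, w a \in Inj] && ~~ Rlt_dec (INR #|hit_closure rr w U|) s].
  apply/setP => w; rewrite !inE; congr (_ && _); apply: eq_forallb => a.
  by rewrite /slot_range /avoiders !inE no_hit.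
move/Rle_trans; apply; rewrite /potential big_const_ord iter_Rmult /slot_weight n_hitters0 /=.
have -> : INR #|Inj| - 0 + (H * INR #|Inj| - 0) * (exp lam - 1) =
          INR #|Inj| * (1 + H * (exp lam - 1)) by ring.
have h_ge0 : 0 <= H * (exp lam - 1) by apply: Rmult_le_pos => //; have := exp_ge1 lam_ge0; lra.
have := pow_le_exp m h_ge0; have := exp_pos (- lam * ((s - INR #|U|) / INR (k - rr))).
have : 0 <= INR #|Inj| ^ m by apply/pow_le/pos_INR.
rewrite Rpow_mult_distr [X in _ <= _ * X]exp_plus -Ropp_mult_distr_l.
move: (INR #|Inj| ^ m) (exp (INR m * _)) (exp (- _)) ((1 + _) ^ m) => I Q E P I0 E0 PQ.
have := Rmult_le_compat_l (E * I) _ _ (Rmult_le_pos _ _ (Rlt_le _ _ E0) I0) PQ.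
lra.
Qed.

End Exploration.

(** * Asymptotics *)

Lemma mu_cE k p : (p.+2 <= k)%N ->
  mu_c k p.+2 = INR p ^ p / (INR (k - p.+1) * INR 'C(k, p.+1) * INR p.+1 ^ p.+1).
Proof.
move=> pk; rewrite /mu_c (_ : (p.+2 - 2 = p)%N) 1?(_ : (p.+2 - 1 = p.+1)%N) //; try lia.
have binE : INR p.+2 * INR 'C(k, p.+2) = INR (k - p.+1) * INR 'C(k, p.+1).
  by rewrite -!mult_INR; congr INR; exact: mul_bin_left.
have C2_gt0 : 0 < INR 'C(k, p.+2) by apply/lt_0_INR/ltP; rewrite bin_gt0.
have p2_gt0 : 0 < INR p.+2 by apply/lt_0_INR/ltP.
have p1_gt0 : 0 < INR p.+1 ^ p.+1 by apply/pow_lt/lt_0_INR/ltP.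
rewrite -binE; field; lra.
Qed.

Lemma lt_mu_c k p mu : (p.+2 <= k)%N -> (0 < p)%N -> mu < mu_c k p.+2 ->
  mu * INR 'C(k, p.+1) * (1 + / INR p) ^ p.+1 < / INR p / INR (k - p.+1).
Proof.
move=> pk p_gt0; rewrite mu_cE //.
have p0 : 0 < INR p by apply/lt_0_INR/ltP.
have d0 : 0 < INR (k - p.+1) by apply/lt_0_INR/ltP; lia.
have C0 : 0 < INR 'C(k, p.+1) by apply/lt_0_INR/ltP; rewrite bin_gt0; lia.
have K0 : 0 < INR 'C(k, p.+1) * (1 + / INR p) ^ p.+1.
  by apply: Rmult_lt_0_compat => //; apply: pow_lt; have := Rinv_0_lt_compat _ p0; lra.
move=> /(Rmult_lt_compat_r _ _ _ K0); rewrite -Rmult_assoc => /Rlt_le_trans; apply; right.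
have -> : 1 + / INR p = INR p.+1 / INR p by rewrite S_INR; field; lra.
rewrite Rpow_mult_distr pow_inv /= -/(INR p.+1 ^ p.+1).
have : 0 < INR p ^ p by apply: pow_lt.
have : 0 < INR p.+1 ^ p.+1 by apply/pow_lt/lt_0_INR/ltP.
move: (INR p ^ p) (INR p.+1 ^ p.+1) => x y x0 y0; field; lra.
Qed.

Lemma pow_ge_1_sub t j : 0 <= t <= 1 -> 1 - INR j * t <= (1 - t) ^ j.
Proof.
move=> t01; elim: j => [|j IH]; first by rewrite /=; lra.
rewrite S_INR /=; have := Rmult_le_compat_l (1 - t) _ _ ltac:(lra) IH.
by have := pos_INR j; nra.
Qed.

Lemma ffact_ge_pow n j : ((n - j) ^ j <= n ^_ j)%N.
Proof.
elim: j n => [|j IH] n; first by rewrite expn0 ffactn0.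
rewrite ffactnS expnS; apply: leq_mul; first exact: leq_subr.
by apply: leq_trans (IH n.-1); rewrite (_ : n - j.+1 = n.-1 - j)%N //; lia.
Qed.

(* From n^_k >= (n - k)^k >= n^k (1 - k^2 / n) by Bernoulli's inequality. *)
Lemma pow_le_ffact_eventually k th : 1 < th -> exists N, forall n, (N <= n)%N ->
  (k < n)%N /\ INR n ^ k <= th * INR (n ^_ k).
Proof.
move=> th1; have [N0 N0_large] := INR_archimed (th - 1) (INR k * INR k * th) ltac:(lra).
exists (maxn N0 k.+1) => n; rewrite geq_max => /andP[/leP/le_INR N0n kn]; split => //.
have k0 := pos_INR k; have kn' : INR k < INR n by apply/lt_INR/ltP.
have z0 : 0 < / INR n by apply: Rinv_0_lt_compat; lra.
have nz : INR n * / INR n = 1 by apply: Rinv_r; lra.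
have kz01 : 0 <= INR k * / INR n <= 1 by split; nra.
have factE : INR n ^ k * (1 - INR k * / INR n) ^ k = INR ((n - k) ^ k).
  rewrite INR_expn minus_INR; last by apply/leP; exact: ltnW.
  by rewrite -Rpow_mult_distr; congr (_ ^ _); field; lra.
have fact_le : INR ((n - k) ^ k) <= INR (n ^_ k) by apply/le_INR/leP/ffact_ge_pow.
have th_le : 1 <= th * (1 - INR k * (INR k * / INR n)).
  have : INR k * INR k * th < INR n * (th - 1) by nra.
  by move/(Rmult_lt_compat_r _ _ _ z0); nra.
have : INR n ^ k * (1 - INR k * (INR k * / INR n)) <= INR (n ^_ k).
  rewrite -factE in fact_le; apply: Rle_trans fact_le.
  by apply: Rmult_le_compat_l; [apply: pow_le; lra | exact: pow_ge_1_sub].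
by have := pow_le (INR n) k ltac:(lra); nra.
Qed.

Lemma m_of_le mu r u n : 0 < mu -> 0 < INR (u n) ->
  INR (m_of mu r u n) <= mu * INR n ^ (r - 1) / INR (u n) ^ (r - 2).
Proof.
move=> mu0 u0; apply: INR_floor_le; apply: Rmult_le_pos.
  by apply: Rmult_le_pos; [lra | apply/pow_le/pos_INR].
by apply/Rlt_le/Rinv_0_lt_compat/pow_lt.
Qed.

Lemma hit_mass_le (p k : nat) (C mu th x y un F : R) : (0 < p)%N -> (p.+1 <= k)%N ->
  0 <= C -> 0 <= mu -> 0 < un -> 0 < F -> 0 <= y ->
  x <= mu * y ^ p.+1 / un ^ p -> y ^ k <= th * F ->
  x * (C * ((1 + / INR p) * un) ^ p.+1 * y ^ (k - p.+1) / F) <=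
  th * (mu * C * (1 + / INR p) ^ p.+1) * un.
Proof.
move=> p0 pk C0 mu0 un0 F0 y0 x_le yk_le.
have p0R : 0 < INR p by apply/lt_0_INR/ltP.
have c0 : 0 < 1 + / INR p by have := Rinv_0_lt_compat _ p0R; lra.
have alpha0 : 0 <= mu * C * (1 + / INR p) ^ p.+1.
  by apply: Rmult_le_pos; [nra | apply: pow_le; lra].
apply: Rle_trans (Rmult_le_compat_r _ _ _ _ x_le) _.
  apply: Rmult_le_pos; last exact/Rlt_le/Rinv_0_lt_compat.
  apply: Rmult_le_pos; last exact: pow_le.
  by apply: Rmult_le_pos => //; apply: pow_le; nra.
have -> : mu * y ^ p.+1 / un ^ p * (C * ((1 + / INR p) * un) ^ p.+1 * y ^ (k - p.+1) / F) =
          mu * C * (1 + / INR p) ^ p.+1 * un * (y ^ k / F).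
  rewrite (_ : k = p.+1 + (k - p.+1))%N ?pow_add; last by lia.
  rewrite (_ : (p.+1 + (k - p.+1)) - p.+1 = k - p.+1)%N; last by lia.
  have : 0 < un ^ p by exact: pow_lt.
  by rewrite Rpow_mult_distr /=; move: (un ^ p) => up up0; field; lra.
have : y ^ k * / F <= th.
  have := Rmult_le_compat_r (/ F) _ _ (Rlt_le _ _ (Rinv_0_lt_compat _ F0)) yk_le.
  by rewrite Rmult_assoc Rinv_r ?Rmult_1_r; lra.
rewrite /Rdiv; move: (y ^ k * / F) => t t_le.
move: (mu * C * _) alpha0 => A A0.
have : 0 <= A * un by nra.
nra.
Qed.

Lemma div_gt1 a b : 0 < a < b -> 1 < b / a.
Proof.
by move=> [a0 ab]; apply: (Rmult_lt_reg_r a) => //; rewrite /Rdiv Rmult_assoc Rinv_l; lra.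
Qed.

Lemma ln_div_gt0 a b : 0 < a < b -> 0 < ln (b / a).
Proof. by move/div_gt1 => ba1; rewrite -ln_1; apply: ln_increasing; lra. Qed.

Lemma ln_gap a b : 0 < a < b -> 0 < b * ln (b / a) - (b - a).
Proof.
move=> ab; have [a0 _] := ab; have lam0 := ln_div_gt0 ab; have ba1 := div_gt1 ab.
have := exp_ineq1 (- ln (b / a)) ltac:(lra); rewrite exp_Ropp exp_ln ?Rinv_div; last lra.
have : a / b * b = a by field; lra.
nra.
Qed.

(* The optimal Chernoff parameter [lam = ln (b / a)] for a hit mass [a un]
   against a required growth [b un]. *)
Lemma exponent_le (a b x h y un : R) : 0 < a < b ->
  0 <= x * h <= a * un -> b * un <= y ->
  x * (h * (exp (ln (b / a)) - 1)) - ln (b / a) * y <= - (b * ln (b / a) - (b - a)) * un.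
Proof.
move=> ab [xh0 xh_le] y_ge.
have lam0 := Rlt_le _ _ (ln_div_gt0 ab); have ba1 := div_gt1 ab.
rewrite exp_ln; last lra.
rewrite -Rmult_assoc.
have : x * h * (b / a - 1) <= a * un * (b / a - 1) by apply: Rmult_le_compat_r; lra.
have -> : a * un * (b / a - 1) = (b - a) * un by field; lra.
have := Rmult_le_compat_l _ _ _ lam0 y_ge; nra.
Qed.

Lemma card_injective_families n k m :
  #|[set w : {ffun 'I_m -> {ffun 'I_k -> 'I_n}} | [forall a, injectiveb (w a)]]| =
  ((n ^_ k) ^ m)%N.
Proof.
transitivity #|[set w : {ffun 'I_m -> {ffun 'I_k -> 'I_n}} |
                [forall a, w a \in [set v : {ffun 'I_k -> 'I_n} | injectiveb v]]]|.
  by apply: eq_card => w; rewrite !inE; apply: eq_forallb => a; rewrite inE.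
by rewrite card_family_set prod_nat_const card_ord card_inj_ffuns !card_ord.
Qed.

Lemma card_good_pairs (A B : finType) (P Q : pred A) (e : R) :
  INR #|[set x | P x && ~~ Q x]| <= e * INR #|[set x | P x]| ->
  (1 - e) * INR #|[set w : A * B | P w.1]| <= INR #|[set w : A * B | P w.1 && Q w.1]|.
Proof.
rewrite (card_pairs_fst _ P) (card_pairs_fst _ (fun x => P x && Q x)) !mult_INR.
have := cardsID [set x | Q x] [set x | P x].
have -> : [set x | P x] :&: [set x | Q x] = [set x | P x && Q x] by apply/setP => x; rewrite !inE.
have -> : [set x | P x] :\: [set x | Q x] = [set x | P x && ~~ Q x].
  by apply/setP => x; rewrite !inE andbC.
move=> /(f_equal INR); rewrite plus_INR => <- bad_le.
have := pos_INR #|B|; nra.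
Qed.

Section Tail.

Variables (k p : nat) (mu : R).
Hypotheses (pk : (p.+2 <= k)%N) (p_gt0 : (0 < p)%N).
Hypotheses (mu_gt0 : 0 < mu) (mu_lt : mu < mu_c k p.+2).

Let alpha := mu * INR 'C(k, p.+1) * (1 + / INR p) ^ p.+1.
Let beta := / INR p / INR (k - p.+1).
Let alpha' := (alpha + beta) / 2.
Let lam := ln (beta / alpha').

Lemma alpha_gt0 : 0 < alpha.
Proof.
have p0 : 0 < INR p by apply/lt_0_INR/ltP.
have C0 : 0 < INR 'C(k, p.+1) by apply/lt_0_INR/ltP; rewrite bin_gt0; lia.
by apply: Rmult_lt_0_compat; [nra | apply: pow_lt; have := Rinv_0_lt_compat _ p0; lra].
Qed.

Lemma alpha'_between : alpha < alpha' < beta.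
Proof.
have : alpha < beta by exact: lt_mu_c.
by rewrite /alpha'; lra.
Qed.

Lemma card_large_closure_prefix_le n m un : (0 < un)%N -> (k < n)%N ->
  INR m <= mu * INR n ^ p.+1 / INR un ^ p ->
  INR n ^ k <= alpha' / alpha * INR (n ^_ k) ->
  INR #|[set w : {ffun 'I_m -> {ffun 'I_k -> 'I_n}} | [forall a, injectiveb (w a)] &&
         ~~ Rlt_dec (INR #|hit_closure p.+1 w [set i : 'I_n | (i < un)%N]|)
                    ((1 + / INR p) * INR un)]| <=
  exp (- (beta * lam - (beta - alpha')) * INR un) *
  INR #|[set w : {ffun 'I_m -> {ffun 'I_k -> 'I_n}} | [forall a, injectiveb (w a)]]|.
Proof.
move=> un_gt0 kn m_le nk_le.
have p0 : 0 < INR p by apply/lt_0_INR/ltP.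
have d0 : 0 < INR (k - p.+1) by apply/lt_0_INR/ltP; lia.
have C0 : 0 < INR 'C(k, p.+1) by apply/lt_0_INR/ltP; rewrite bin_gt0; lia.
have F0 : 0 < INR (n ^_ k) by apply/lt_0_INR/ltP; rewrite ffact_gt0 ltnW.
have un0 : 0 < INR un by apply/lt_0_INR/ltP.
set s := (1 + / INR p) * INR un; set U := [set i : 'I_n | (i < un)%N].
have s0 : 0 < s by apply: Rmult_lt_0_compat => //; have := Rinv_0_lt_compat _ p0; lra.
pose Inj := [set v : {ffun 'I_k -> 'I_n} | injectiveb v].
have cardInj : #|Inj| = n ^_ k by rewrite card_inj_ffuns !card_ord.
pose H := INR 'C(k, p.+1) * s ^ p.+1 * INR n ^ (k - p.+1) / INR (n ^_ k).
have H0 : 0 <= H.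
  apply: Rmult_le_pos; last exact/Rlt_le/Rinv_0_lt_compat.
  by apply: Rmult_le_pos; [apply: Rmult_le_pos; [lra | apply: pow_le; lra] | apply/pow_le/pos_INR].
have few (X : {set 'I_n}) : INR #|X| < s -> INR (n_hitters p.+1 Inj X) <= H * INR #|Inj|.
  move/Rlt_le/(n_hitters_le_pow Inj (ltnW pk)) => /Rle_trans; apply; right.
  by rewrite cardInj /H; field; lra.
have lam0 : 0 <= lam by apply/Rlt_le/ln_div_gt0; have := alpha'_between; have := alpha_gt0; lra.
have := card_large_closure_le m lam0 pk few U (ltn0Sn p) H0.
rewrite (@eq_card _ _ [set w : {ffun 'I_m -> {ffun 'I_k -> 'I_n}} |
    [forall a, injectiveb (w a)] && ~~ Rlt_dec (INR #|hit_closure p.+1 w U|) s]); last first.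
  by move=> w; rewrite !inE; congr (_ && _); apply: eq_forallb => a; rewrite inE.
move/Rle_trans; apply; rewrite card_injective_families INR_expn -cardInj Rmult_comm.
apply: Rmult_le_compat_r; first exact/pow_le/pos_INR.
apply/exp_le/exponent_le; first by have := alpha'_between; have := alpha_gt0; lra.
  split; first exact/Rmult_le_pos/H0/pos_INR.
  have := hit_mass_le p_gt0 (ltnW pk) (Rlt_le _ _ C0) (Rlt_le _ _ mu_gt0) un0 F0
            (pos_INR n) m_le nk_le.
  move=> /Rle_trans; apply; rewrite -/alpha; right.
  by have := alpha_gt0; move: (alpha') (alpha) => y x x0; field; lra.
have U_le : INR #|U| <= INR un by apply/le_INR/leP/card_ord_prefix_le.
have : INR un * / INR p <= s - INR #|U| by rewrite /s; lra.
move/(Rmult_le_compat_r (/ INR (k - p.+1))) => /(_ (Rlt_le _ _ (Rinv_0_lt_compat _ d0))).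
by rewrite /beta /Rdiv => h; apply: Rle_trans h; right; ring.
Qed.

Lemma large_closure_tail (u : nat -> nat) :
  (exists N, forall n, (N <= n)%N -> (0 < u n)%N) ->
  exists c, 0 < c /\ exists N, forall n, (N <= n)%N ->
    INR #|[set w : {ffun 'I_(m_of mu p.+2 u n) -> {ffun 'I_k -> 'I_n}} |
           [forall a, injectiveb (w a)] &&
           ~~ Rlt_dec (INR #|hit_closure p.+1 w [set i : 'I_n | (i < u n)%N]|)
                      ((1 + / INR p) * INR (u n))]| <=
    exp (- c * INR (u n)) *
    INR #|[set w : {ffun 'I_(m_of mu p.+2 u n) -> {ffun 'I_k -> 'I_n}} |
           [forall a, injectiveb (w a)]]|.
Proof.
move=> [Nu u_pos]; have alpha0 := alpha_gt0; have between := alpha'_between.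
exists (beta * lam - (beta - alpha')); split; first by apply: ln_gap; lra.
have th1 : 1 < alpha' / alpha by apply: div_gt1; lra.
have [Nf fact_le] := pow_le_ffact_eventually k th1.
exists (maxn Nf Nu) => n; rewrite geq_max => /andP[/fact_le[kn nk_le] /u_pos u0].
apply: card_large_closure_prefix_le => //.
have := @m_of_le mu p.+2 u n mu_gt0 (lt_0_INR _ (ltP u0)).
by rewrite !subSS !subn0.
Qed.

End Tail.

Theorem theorem1 (q k l r : nat) (u : nat -> nat)
  (F : nat -> nat -> {ffun 'I_k -> 'I_q} -> {ffun 'I_l -> 'I_q}) (mu : R) :
  (2 <= q)%N -> (3 <= k)%N -> (1 <= l)%N -> (l <= k - 1)%N ->
  (3 <= r)%N -> (r <= k)%N ->
  (forall M : nat, exists N : nat, forall n : nat, (N <= n)%N -> (M <= u n)%N) ->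
  (forall eps : R, (0 < eps)%R -> exists N : nat, forall n : nat, (N <= n)%N ->
      (INR (u n) / INR n < eps)%R) ->
  (forall n a : nat, surj_loc (F n a) /\ wise_indep (r - 1) (F n a)) ->
  (0 < mu)%R -> (mu < mu_c k r)%R ->
  exists c : R, (0 < c)%R /\
  exists N : nat, forall n : nat, (N <= n)%N ->
    exists G : {set {ffun 'I_(m_of mu r u n) -> {ffun 'I_k -> 'I_n}}
                    * {ffun 'I_n -> 'I_q}},
      G \subset sample_space q n k (m_of mu r u n) /\
      ((1 - exp (- c * INR (u n))) * INR #|sample_space q n k (m_of mu r u n)|
         <= INR #|G|)%R /\
      (forall w, w \in G ->
         lp_small_zero_opt (u n) (F n) w.1 w.2
           ((1 + / INR (r - 2)) * INR (u n))%R).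
Proof.
move=> q2 _ _ _ r3 rk u_unbounded _ F_props mu0 mu_lt.
have [p r_eq] : exists p, r = p.+2 by exists (r - 2)%N; lia.
subst r; rewrite !subSS !subn0.
have u_pos : exists N, forall n, (N <= n)%N -> (0 < u n)%N by exact: u_unbounded 1%N.
have [c [c0 [N tail]]] := large_closure_tail rk r3 mu0 mu_lt u_pos.
exists c; split => //; exists N => n /tail bad_le.
set U := [set i : 'I_n | (i < u n)%N].
exists [set w : {ffun 'I_(m_of mu p.+2 u n) -> {ffun 'I_k -> 'I_n}} * {ffun 'I_n -> 'I_q} |
         [forall a, injectiveb (w.1 a)] &&
               Rlt_dec (INR #|hit_closure p.+1 w.1 U|) ((1 + / INR p) * INR (u n))].
split; [|split].
- by apply/subsetP => w; rewrite !inE => /andP[].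
- rewrite /sample_space; move: bad_le.
  exact: (@card_good_pairs _ {ffun 'I_n -> 'I_q}
            (fun t : {ffun 'I_(m_of mu p.+2 u n) -> {ffun 'I_k -> 'I_n}} =>
               [forall a, injectiveb (t a)])
            (fun t => Rlt_dec (INR #|hit_closure p.+1 t U|) ((1 + / INR p) * INR (u n)))).
- move=> w; rewrite inE => /andP[_ /sumboolP small].
  apply: (lp_small_zero_opt_of_closed (r := p.+2)) small => //.
  + by move=> a; have [] := F_props n a.
  + exact: hit_closure_closed.
  + by move=> i i_lt; apply: (subsetP (subset_hit_closure _ _ _)); rewrite inE.
Qed.
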